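(* Let $A$ and $B$ be rings, $f: A\to B$ a ring homomorphism and $J$ a proper ideal of $B$ such that $J\cap \mathrm{nil}(B)=(0)$. Then $A\bowtie^{f}J$ is an Armendariz ring if and only if $A$ is an Armendariz ring.
   Context: All rings are associative with identity (not necessarily commutative), ring homomorphisms are unital, and ideals are two-sided. $\mathrm{nil}(R)$ denotes the set of nilpotent elements of a ring $R$. For a ring homomorphism $f:A\to B$ and an ideal $J$ of $B$, the amalgamation is the subring $A\bowtie^{f}J=\{(a,f(a)+j)\mid a\in A,\ j\in J\}$ of $A\times B$. A ring $R$ is Armendariz if whenever $p(x)=\sum_{i=0}^n a_ix^i$ and $q(x)=\sum_{j=0}^m b_jx^j$ in $R[x]$ satisfy $p(x)q(x)=0$, then $a_ib_j=0$ for all $i,j$. *)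

From HB Require Import structures.
From mathcomp Require Import all_boot all_order all_algebra.
Set Implicit Arguments. Unset Strict Implicit. Unset Printing Implicit Defensive.
Import GRing.Theory.
Local Open Scope ring_scope.

Definition is_ideal (B : nzRingType) (J : {pred B}) : Prop :=
  [/\ 0 \in J,
      (forall u v, u \in J -> v \in J -> u - v \in J) &
      (forall a u, u \in J -> (a * u \in J) /\ (u * a \in J))].

Definition is_proper_ideal (B : nzRingType) (J : {pred B}) : Prop :=
  is_ideal J /\ exists b, b \notin J.

Definition nilp (B : nzRingType) (x : B) : Prop := exists n : nat, x ^+ n = 0.

Definition meets_nil_trivially (B : nzRingType) (J : {pred B}) : Prop :=
  forall x, x \in J -> nilp x -> x = 0.

Definition Armendariz (R : nzRingType) : Prop :=
  forall p q : {poly R}, p * q = 0 -> forall i j, p`_i * q`_j = 0.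

(* Armendariz property of a subring S of R: polynomials with coefficients in S
   (i.e. elements of S[x], whose multiplication is that of R[x]). *)
Definition Armendariz_sub (R : nzRingType) (S : R -> Prop) : Prop :=
  forall p q : {poly R}, (forall i, S p`_i) -> (forall i, S q`_i) ->
    p * q = 0 -> forall i j, p`_i * q`_j = 0.

Definition amalgamation (A B : nzRingType) (f : {rmorphism A -> B}) (J : {pred B})
  : (A * B)%type -> Prop :=
  fun x => exists (a : A) (j : B), j \in J /\ x = (a, f a + j).

From HB Require Import structures.
From mathcomp Require Import all_boot all_order all_algebra.
Set Implicit Arguments.
Unset Strict Implicit.
Unset Printing Implicit Defensive.
Import GRing.Theory.
Local Open Scope ring_scope.

(* Lifting along a |-> (a, f a), an Armendariz relation in A becomes one in the
   amalgamation. Conversely, if P Q = 0 over the amalgamation then the first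
   components give a_i b_j = 0 in A, which puts w := c_i d_j (second components)
   in J. An ideal J free of nonzero nilpotents is "Armendariz" for polynomials
   with coefficients in J, exactly as a reduced ring is; applied to the
   polynomials w c and d w, whose product w (c d) w vanishes, it yields
   w^3 = w c_i d_j w = 0, hence w = 0. *)

Lemma mul_drop_poly1_eq0 (R : nzRingType) (p q : {poly R}) :
  p * q = 0 -> (forall j, p`_0 * q`_j = 0) -> drop_poly 1 p * q = 0.
Proof.
move=> pq p0q; apply/polyP => n.
have := congr1 (fun r : {poly R} => r`_n.+1) pq.
rewrite /= coefM big_ord_recl p0q add0r coef0 => sum0.
rewrite coef0 -[RHS]sum0 coefM; apply: eq_bigr => k _.
by rewrite coef_drop_poly addn1.
Qed.

Section ReducedIdeal.

Variables (B : nzRingType) (J : {pred B}).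
Hypotheses (idealJ : is_ideal J) (nilJ : meets_nil_trivially J).

Lemma idealMl a u : u \in J -> a * u \in J.
Proof. by case: idealJ => _ _ JM uJ; case: (JM a u uJ). Qed.

Lemma idealMr a u : u \in J -> u * a \in J.
Proof. by case: idealJ => _ _ JM uJ; case: (JM a u uJ). Qed.

Lemma idealD u v : u \in J -> v \in J -> u + v \in J.
Proof.
case: idealJ => J0 JB _ uJ vJ.
have nvJ : - v \in J by rewrite -sub0r JB.
by rewrite -[v]opprK JB.
Qed.

Lemma ideal_sqr_eq0 x : x \in J -> x * x = 0 -> x = 0.
Proof. by move=> xJ xx0; apply: nilJ => //; exists 2%N; rewrite expr2. Qed.

Lemma ideal_mul_eq0C x y : x \in J -> x * y = 0 -> y * x = 0.
Proof.
move=> xJ xy0; apply: ideal_sqr_eq0; first exact: idealMl.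
by rewrite mulrA -(mulrA y) xy0 mulr0 mul0r.
Qed.

(* The j-th coefficient of p * q, multiplied on the right by p_0, reduces to
   p_0 q_j p_0 because q_k p_0 = 0 for k < j by induction; then (p_0 q_j)^2 = 0. *)
Lemma ideal_coef0_mul_eq0 (p q : {poly B}) :
  p`_0 \in J -> p * q = 0 -> forall j, p`_0 * q`_j = 0.
Proof.
move=> p0J pq; elim/ltn_ind=> j IHj.
have q_p0 k : (k < j)%N -> q`_k * p`_0 = 0.
  by move=> lt_kj; apply: ideal_mul_eq0C => //; apply: IHj.
have := congr1 (fun r : {poly B} => r`_j * p`_0) pq.
rewrite /= coefM coef0 mul0r big_ord_recl mulrDl mulr_suml big1 ?addr0 => [|k _].
  rewrite /= subn0 => p0qjp0; apply: ideal_sqr_eq0; first exact: idealMr.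
  by rewrite mulrA p0qjp0 mul0r.
by rewrite -mulrA q_p0 ?mulr0 // lift0 ltn_subrL /= (leq_ltn_trans _ (ltn_ord k)).
Qed.

Lemma ideal_Armendariz (p q : {poly B}) :
  (forall i, p`_i \in J) -> p * q = 0 -> forall i j, p`_i * q`_j = 0.
Proof.
move=> pJ pq i; elim: i p pJ pq => [|i IHi] p pJ pq j.
  exact: ideal_coef0_mul_eq0.
rewrite -addn1 -coef_drop_poly; apply: IHi => [k|].
  by rewrite coef_drop_poly.
by apply: mul_drop_poly1_eq0 => // j'; apply: ideal_coef0_mul_eq0.
Qed.

End ReducedIdeal.

Section Amalgamation.

Variables (A B : nzRingType) (f : {rmorphism A -> B}) (J : {pred B}).

Definition amalg_diag (a : A) : A * B := (a, f a).

Fact amalg_diag_is_nmod_morphism : nmod_morphism amalg_diag.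
Proof. by split=> [|a b]; rewrite /amalg_diag ?rmorph0 ?rmorphD. Qed.

Fact amalg_diag_is_monoid_morphism : monoid_morphism amalg_diag.
Proof. by split=> [|a b]; rewrite /amalg_diag ?rmorph1 ?rmorphM. Qed.

HB.instance Definition _ :=
  GRing.isNmodMorphism.Build A (A * B)%type amalg_diag amalg_diag_is_nmod_morphism.
HB.instance Definition _ :=
  GRing.isMonoidMorphism.Build A (A * B)%type amalg_diag amalg_diag_is_monoid_morphism.

Lemma Armendariz_of_amalgamation :
  0 \in J -> Armendariz_sub (amalgamation f J) -> Armendariz A.
Proof.
move=> J0 armS p q pq i j.
have diagS (r : {poly A}) k : amalgamation f J (map_poly amalg_diag r)`_k.
  by rewrite coef_map; exists r`_k, 0; rewrite addr0.
have := armS _ _ (diagS p) (diagS q) _ i j.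
rewrite -rmorphM pq rmorph0 !coef_map => /(_ erefl).
by move/(congr1 fst).
Qed.

Lemma amalgamation_mul_snd (x y : A * B) : is_ideal J ->
  amalgamation f J x -> amalgamation f J y -> x.1 * y.1 = 0 -> x.2 * y.2 \in J.
Proof.
move=> idealJ [a [u [uJ ->]]] [b [v [vJ ->]]] /= ab0.
rewrite mulrDl !mulrDr -rmorphM ab0 rmorph0 add0r.
apply: (idealD idealJ); first exact: (idealMl idealJ).
by apply: (idealD idealJ); apply: (idealMr idealJ).
Qed.

Lemma Armendariz_amalgamation : is_ideal J -> meets_nil_trivially J ->
  Armendariz A -> Armendariz_sub (amalgamation f J).
Proof.
move=> idealJ nilJ armA p q pS qS pq i j.
have fst0 k l : (p`_k).1 * (q`_l).1 = 0.
  have := armA (map_poly fst p) (map_poly fst q) _ k l.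
  by rewrite !coef_map; apply; rewrite -rmorphM pq rmorph0.
pose w := (p`_i).2 * (q`_j).2.
have wJ : w \in J by apply: amalgamation_mul_snd.
have w3 : w * w * w = 0.
  pose p' := w%:P * map_poly snd p; pose q' := map_poly snd q * w%:P.
  have p'q' : p' * q' = 0 by rewrite mulrA -(mulrA w%:P) -rmorphM pq rmorph0 mulr0 mul0r.
  have p'J k : p'`_k \in J by rewrite coefCM (idealMr idealJ).
  rewrite {2}/w mulrA.
  have := ideal_Armendariz idealJ nilJ p'J p'q' i j.
  by rewrite coefCM coefMC !coef_map mulrA.
have w0 : w = 0 by apply: nilJ => //; exists 3%N; rewrite !exprS expr0 mulr1 mulrA.
by apply/eqP; rewrite xpair_eqE fst0 -/w w0 !eqxx.
Qed.

End Amalgamation.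

Theorem theorem2p2 (A B : nzRingType) (f : {rmorphism A -> B}) (J : {pred B}) :
  is_proper_ideal J -> meets_nil_trivially J ->
  (Armendariz_sub (amalgamation f J) <-> Armendariz A).
Proof.
move=> [idealJ _] nilJ; split; last exact: Armendariz_amalgamation.
by apply: Armendariz_of_amalgamation; case: idealJ.
Qed.
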